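(* Let $(X,T)$ be a topological dynamical system such that $(X,T^j)$ is uniquely ergodic for every $j\ge1$, let $k\ge1$, and let $f\in C(X)$. Suppose that for every $\alpha\in\mathbb{R}$ and every $x\in X$, $$\lim_{N\to\infty}\sup_{P\in\mathbb{R}_{k-1}[t]}\left|\frac1N\sum_{n=0}^{N-1}e^{2\pi i(n^k\alpha+P(n))}f(T^nx)\right|=0.$$ Then for every $x\in X$, $$\lim_{N\to\infty}\sup_{P\in\mathbb{R}_{k}[t]}\left|\frac1N\sum_{n=0}^{N-1}e^{2\pi iP(n)}f(T^nx)\right|=0.$$
   Context: A topological dynamical system is a compact metric space $X$ with a continuous map $T:X\to X$. $\mathbb{R}_j[t]$ denotes real polynomials of degree at most $j$ ($\mathbb{R}_0[t]$ = real constants). *)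

From Stdlib Require Export Reals.
Open Scope R_scope.

Definition is_metric {X : Type} (d : X -> X -> R) : Prop :=
  (forall x y, 0 <= d x y) /\
  (forall x y, d x y = 0 <-> x = y) /\
  (forall x y, d x y = d y x) /\
  (forall x y z, d x z <= d x y + d y z).

Definition seq_converges {X : Type} (d : X -> X -> R) (u : nat -> X) (l : X) : Prop :=
  forall eps, eps > 0 -> exists N, forall n, (n >= N)%nat -> d (u n) l < eps.

(* Compactness of a metric space (= sequential compactness for metric spaces). *)
Definition metric_compact {X : Type} (d : X -> X -> R) : Prop :=
  forall u : nat -> X, exists (phi : nat -> nat) (l : X),
    (forall n, (phi n < phi (S n))%nat) /\ seq_converges d (fun n => u (phi n)) l.

Definition continuous_map {X : Type} (d : X -> X -> R) (T : X -> X) : Prop :=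
  forall x eps, eps > 0 -> exists delta, delta > 0 /\
    forall y, d x y < delta -> d (T x) (T y) < eps.

Definition continuous_fun {X : Type} (d : X -> X -> R) (f : X -> R) : Prop :=
  forall x eps, eps > 0 -> exists delta, delta > 0 /\
    forall y, d x y < delta -> Rabs (f x - f y) < eps.

Definition tds {X : Type} (d : X -> X -> R) (T : X -> X) : Prop :=
  is_metric d /\ metric_compact d /\ continuous_map d T.

Fixpoint iter_map {X : Type} (n : nat) (T : X -> X) (x : X) : X :=
  match n with O => x | S m => T (iter_map m T x) end.

(* ---------- Invariant measures via Riesz representation ----------
   A Borel probability measure on a compact metric space X is the same as a
   positive linear functional L on C(X) with L(1) = 1.  L is given as a
   function on all of X -> R, but only its values on continuous functions
   are constrained / compared. *)
Definition invariant_state {X : Type} (d : X -> X -> R) (T : X -> X)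
    (L : (X -> R) -> R) : Prop :=
  (forall f g a b, continuous_fun d f -> continuous_fun d g ->
     L (fun x => a * f x + b * g x) = a * L f + b * L g) /\
  (forall f, continuous_fun d f -> (forall x, 0 <= f x) -> 0 <= L f) /\
  L (fun _ => 1) = 1 /\
  (forall f, continuous_fun d f -> L (fun x => f (T x)) = L f).

Definition uniquely_ergodic {X : Type} (d : X -> X -> R) (T : X -> X) : Prop :=
  (exists L, invariant_state d T L) /\
  (forall L1 L2, invariant_state d T L1 -> invariant_state d T L2 ->
     forall f, continuous_fun d f -> L1 f = L2 f).

(* P(t) = sum_{j < m} c j * t^j, i.e. an element of R_{m-1}[t]. *)
Fixpoint poly_eval (c : nat -> R) (m : nat) (t : R) : R :=
  match m with O => 0 | S j => poly_eval c j t + c j * t ^ j end.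

(* Real and imaginary parts of sum_{n<N} e^{2 pi i theta(n)} (fr + i fi)(T^n x) *)
Fixpoint expsum_re {X : Type} (theta : nat -> R) (fr fi : X -> R) (T : X -> X)
    (x : X) (N : nat) : R :=
  match N with
  | O => 0
  | S n => expsum_re theta fr fi T x n
           + (cos (2 * PI * theta n) * fr (iter_map n T x)
              - sin (2 * PI * theta n) * fi (iter_map n T x))
  end.

Fixpoint expsum_im {X : Type} (theta : nat -> R) (fr fi : X -> R) (T : X -> X)
    (x : X) (N : nat) : R :=
  match N with
  | O => 0
  | S n => expsum_im theta fr fi T x n
           + (sin (2 * PI * theta n) * fr (iter_map n T x)
              + cos (2 * PI * theta n) * fi (iter_map n T x))
  end.

Definition avg_abs {X : Type} (theta : nat -> R) (fr fi : X -> R) (T : X -> X)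
    (x : X) (N : nat) : R :=
  sqrt (expsum_re theta fr fi T x N ^ 2 + expsum_im theta fr fi T x N ^ 2) / INR N.

(* Fix alpha. By hypothesis the continuous functions
     g_M(y) = sup_(P in R_(k-1)[t]) |1/M sum_(h<M) e(h^k alpha + P(h)) f(T^h y)|
   tend to 0 pointwise, so (Daniell's argument: dominated convergence for the positive
   functional given by the unique invariant measure) some g_M has integral < eps.
   Cut the orbit of x into windows of length M. On each window a phase P of degree k whose
   leading coefficient is within delta of alpha modulo 1 is h^k alpha plus a polynomial of
   degree < k, up to an error O(delta M^k); hence the average is at most the Birkhoff
   average of g_M plus small errors, and unique ergodicity bounds the limsup of that
   Birkhoff average by the integral of g_M at every point x. Compactness of [0, 1] makes
   the bound uniform in the leading coefficient. *)

From Stdlib Require Import Lra Lia Classical ClassicalEpsilon FunctionalExtensionality.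
From mathcomp Require ssreflect boolp classical_sets filter.
From Coquelicot Require Import Complex Rcomplements.
Open Scope R_scope.

Fixpoint sumR (a : nat -> R) (N : nat) : R :=
  match N with O => 0 | S n => sumR a n + a n end.

Lemma sumR_ext a b N : (forall n, (n < N)%nat -> a n = b n) -> sumR a N = sumR b N.
Proof.
  induction N as [|N IH]; intros Hab; simpl; [reflexivity|].
  rewrite IH by (intros n Hn; apply Hab; lia). rewrite Hab by lia. reflexivity.
Qed.

Lemma sumR_plus a b N : sumR (fun n => a n + b n) N = sumR a N + sumR b N.
Proof. induction N as [|N IH]; simpl; [|rewrite IH]; ring. Qed.

Lemma sumR_scal r a N : sumR (fun n => r * a n) N = r * sumR a N.
Proof. induction N as [|N IH]; simpl; [|rewrite IH]; ring. Qed.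

Lemma sumR_const r N : sumR (fun _ => r) N = INR N * r.
Proof. induction N as [|N IH]; [simpl|rewrite S_INR; simpl; rewrite IH]; ring. Qed.

Lemma sumR_le a b N : (forall n, (n < N)%nat -> a n <= b n) -> sumR a N <= sumR b N.
Proof.
  induction N as [|N IH]; intros Hab; simpl; [lra|].
  apply Rplus_le_compat; [apply IH; intros n Hn|]; apply Hab; lia.
Qed.

Lemma sumR_le_const a r N : (forall n, (n < N)%nat -> a n <= r) -> sumR a N <= INR N * r.
Proof. intros Ha. rewrite <- sumR_const. now apply sumR_le. Qed.

Lemma sumR_shift1 a N : sumR (fun n => a (S n)) N = sumR a N + a N - a O.
Proof. induction N as [|N IH]; simpl; [|rewrite IH]; ring. Qed.

Fixpoint csum (a : nat -> C) (N : nat) : C :=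
  match N with O => 0%C | S n => (csum a n + a n)%C end.

Lemma csum_ext a b N : (forall n, (n < N)%nat -> a n = b n) -> csum a N = csum b N.
Proof.
  induction N as [|N IH]; intros Hab; simpl; [reflexivity|].
  rewrite IH by (intros n Hn; apply Hab; lia). rewrite Hab by lia. reflexivity.
Qed.

Lemma csum_plus a b N : csum (fun n => a n + b n)%C N = (csum a N + csum b N)%C.
Proof. induction N as [|N IH]; simpl; [|rewrite IH]; ring. Qed.

Lemma csum_minus a b N : csum (fun n => a n - b n)%C N = (csum a N - csum b N)%C.
Proof. induction N as [|N IH]; simpl; [|rewrite IH]; ring. Qed.

Lemma csum_const (z : C) N : csum (fun _ => z) N = (INR N * z)%C.
Proof. induction N as [|N IH]; [simpl|rewrite S_INR, RtoC_plus; simpl; rewrite IH]; ring. Qed.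

Lemma csum_shift1 a N : csum (fun n => a (S n)) N = (csum a N + a N - a O)%C.
Proof. induction N as [|N IH]; simpl; [|rewrite IH]; ring. Qed.

Lemma csum_swap (F : nat -> nat -> C) N M :
  csum (fun m => csum (F m) M) N = csum (fun h => csum (fun m => F m h) N) M.
Proof.
  induction N as [|N IH]; simpl.
  - rewrite csum_const. ring.
  - rewrite IH, <- csum_plus. reflexivity.
Qed.

Lemma Cmod_csum_le a N : Cmod (csum a N) <= sumR (fun n => Cmod (a n)) N.
Proof.
  induction N as [|N IH]; simpl; [rewrite Cmod_0; lra|].
  eapply Rle_trans; [apply Cmod_triangle|lra].
Qed.

Lemma Cmod_csum_window a B N h : (forall n, Cmod (a n) <= B) ->
  Cmod (csum (fun n => a (n + h)%nat) N - csum a N)%C <= 2 * INR h * B.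
Proof.
  intros HB. induction h as [|h IH].
  - rewrite (csum_ext _ a) by (intros n _; now rewrite Nat.add_0_r).
    replace (csum a N - csum a N)%C with (RtoC 0) by ring. rewrite Cmod_0. simpl. lra.
  - rewrite (csum_ext _ (fun n => a (S n + h)%nat)) by (intros n _; f_equal; lia).
    rewrite (csum_shift1 (fun n => a (n + h)%nat)).
    replace (csum (fun n => a (n + h)%nat) N + a (N + h)%nat - a (0 + h)%nat - csum a N)%C
      with ((csum (fun n => a (n + h)%nat) N - csum a N) + (a (N + h)%nat - a h))%C
      by (simpl; ring).
    eapply Rle_trans; [apply Cmod_triangle|]. rewrite S_INR.
    pose proof (Cmod_triangle (a (N + h)%nat) (- a h)%C). rewrite Cmod_opp in H.
    pose proof (HB (N + h)%nat). pose proof (HB h). unfold Cminus in *. lra.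
Qed.

Lemma Cmod_csum_blocks a B N M : (forall n, Cmod (a n) <= B) ->
  INR M * Cmod (csum a N) <=
  sumR (fun m => Cmod (csum (fun h => a (m + h)%nat) M)) N + 2 * INR M * INR M * B.
Proof.
  intros HB.
  set (E h := (csum (fun n => a (n + h)%nat) N - csum a N)%C).
  assert (Hsplit : (INR M * csum a N)%C =
    (csum (fun m => csum (fun h => a (m + h)%nat) M) N - csum E M)%C).
  { rewrite csum_swap, <- csum_const, <- csum_minus. apply csum_ext. intros h _. unfold E. ring. }
  rewrite <- (Rabs_pos_eq (INR M)) at 1 by apply pos_INR.
  rewrite <- Cmod_R, <- Cmod_mult, Hsplit.
  eapply Rle_trans; [unfold Cminus; apply Cmod_triangle|]. rewrite Cmod_opp.
  apply Rplus_le_compat; [apply Cmod_csum_le|].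
  eapply Rle_trans; [apply Cmod_csum_le|].
  replace (2 * INR M * INR M * B) with (INR M * (2 * INR M * B)) by ring.
  apply sumR_le_const. intros h Hh. eapply Rle_trans; [apply Cmod_csum_window, HB|].
  assert (INR h <= INR M) by (apply le_INR; lia).
  assert (0 <= B) by (eapply Rle_trans; [apply Cmod_ge_0|apply (HB O)]). nra.
Qed.

Definition e2pi (t : R) : C := (cos (2 * PI * t), sin (2 * PI * t)).

Lemma Cmod_e2pi t : Cmod (e2pi t) = 1.
Proof.
  unfold Cmod, e2pi; cbn [fst snd]. rewrite <- sqrt_1. f_equal.
  rewrite <- (sin2_cos2 (2 * PI * t)). unfold Rsqr. ring.
Qed.

Lemma e2pi_add_nat t n : e2pi (t + INR n) = e2pi t.
Proof.
  unfold e2pi. replace (2 * PI * (t + INR n)) with (2 * PI * t + 2 * INR n * PI) by ring.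
  now rewrite cos_period, sin_period.
Qed.

Lemma e2pi_add_int t z : e2pi (t + IZR z) = e2pi t.
Proof.
  destruct (Z.le_ge_cases 0 z) as [Hz|Hz].
  - destruct (IZN z Hz) as [n ->]. now rewrite <- INR_IZR_INZ, e2pi_add_nat.
  - destruct (IZN (- z) ltac:(lia)) as [n Hn].
    rewrite <- (e2pi_add_nat (t + IZR z) n), INR_IZR_INZ, <- Hn, opp_IZR. f_equal. ring.
Qed.

Lemma Cmod_le_Rabs_re_im (z : C) : Cmod z <= Rabs (fst z) + Rabs (snd z).
Proof.
  destruct z as [u v]. cbn [fst snd].
  replace (u, v) with (RtoC u + RtoC v * Ci)%C by (apply injective_projections; simpl; ring).
  eapply Rle_trans; [apply Cmod_triangle|].
  rewrite Cmod_mult, Cmod_Ci, !Cmod_R. lra.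
Qed.

Lemma Rabs_cos_sub_le a b : Rabs (cos b - cos a) <= Rabs (b - a).
Proof.
  destruct (MVT_abs cos (fun c => - sin c) a b) as [c [-> _]].
  - intros c _. apply derivable_pt_lim_cos.
  - rewrite Rabs_Ropp. pose proof (Rabs_pos (b - a)).
    assert (Rabs (sin c) <= 1) by (apply Rabs_le, SIN_bound). nra.
Qed.

Lemma Rabs_sin_sub_le a b : Rabs (sin b - sin a) <= Rabs (b - a).
Proof.
  destruct (MVT_abs sin cos a b) as [c [-> _]].
  - intros c _. apply derivable_pt_lim_sin.
  - pose proof (Rabs_pos (b - a)).
    assert (Rabs (cos c) <= 1) by (apply Rabs_le, COS_bound). nra.
Qed.

Lemma Cmod_e2pi_sub s t : Cmod (e2pi s - e2pi t)%C <= 4 * PI * Rabs (s - t).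
Proof.
  eapply Rle_trans; [apply Cmod_le_Rabs_re_im|]. simpl.
  pose proof (Rabs_cos_sub_le (2 * PI * t) (2 * PI * s)).
  pose proof (Rabs_sin_sub_le (2 * PI * t) (2 * PI * s)).
  replace (2 * PI * s - 2 * PI * t) with (2 * PI * (s - t)) in * by ring.
  rewrite Rabs_mult, (Rabs_pos_eq (2 * PI)) in * by (pose proof PI_RGT_0; lra).
  unfold Rminus in *. lra.
Qed.

Lemma iter_map_add {X} (T : X -> X) h m y : iter_map (h + m) T y = iter_map h T (iter_map m T y).
Proof. induction h as [|h IH]; simpl; [|rewrite IH]; reflexivity. Qed.

Definition twisted_sum {X} (T : X -> X) (f : X -> C) (th : nat -> R) (y : X) (N : nat) : C :=
  csum (fun n => e2pi (th n) * f (iter_map n T y))%C N.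

Definition twisted_avg {X} (T : X -> X) (f : X -> C) (th : nat -> R) (y : X) (N : nat) : R :=
  Cmod (twisted_sum T f th y N) / INR N.

Lemma twisted_sum_re_im {X} th (fr fi : X -> R) T x N :
  twisted_sum T (fun y => (fr y, fi y)) th x N =
  (expsum_re th fr fi T x N, expsum_im th fr fi T x N).
Proof.
  induction N as [|N IH]; [reflexivity|].
  unfold twisted_sum in *. simpl. rewrite IH. apply injective_projections; simpl; ring.
Qed.

Lemma avg_abs_twisted_avg {X} th (fr fi : X -> R) T x N :
  avg_abs th fr fi T x N = twisted_avg T (fun y => (fr y, fi y)) th x N.
Proof. unfold twisted_avg. rewrite twisted_sum_re_im. reflexivity. Qed.

Section TwistedSums.

Context {X : Type} (T : X -> X) {f : X -> C} {B : R} (f_bounded : forall y, Cmod (f y) <= B).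

Lemma Cmod_twisted_sum_le th y N : Cmod (twisted_sum T f th y N) <= INR N * B.
Proof.
  eapply Rle_trans; [apply Cmod_csum_le|]. apply sumR_le_const. intros n _.
  rewrite Cmod_mult, Cmod_e2pi, Rmult_1_l. apply f_bounded.
Qed.

Lemma twisted_avg_bounds th y N : 0 <= B -> 0 <= twisted_avg T f th y N <= B.
Proof.
  intros HB. unfold twisted_avg. destruct N as [|N].
  - simpl. unfold Rdiv. rewrite Rinv_0, Rmult_0_r. lra.
  - assert (HN : 0 < INR (S N)) by apply lt_0_INR, Nat.lt_0_succ.
    split; [apply Rdiv_le_0_compat; [apply Cmod_ge_0|exact HN]|].
    apply Rle_div_l; [exact HN|]. rewrite Rmult_comm. apply Cmod_twisted_sum_le.
Qed.

Lemma twisted_sum_add_int th1 th2 y N : (forall n, exists z, th1 n = th2 n + IZR z) ->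
  twisted_sum T f th1 y N = twisted_sum T f th2 y N.
Proof.
  intros Hint. apply csum_ext. intros n _. destruct (Hint n) as [z ->]. now rewrite e2pi_add_int.
Qed.

Lemma Cmod_twisted_sum_sub_phase th1 th2 y N :
  Cmod (twisted_sum T f th1 y N - twisted_sum T f th2 y N)%C <=
  sumR (fun n => 4 * PI * Rabs (th1 n - th2 n) * B) N.
Proof.
  unfold twisted_sum. rewrite <- csum_minus.
  eapply Rle_trans; [apply Cmod_csum_le|]. apply sumR_le. intros n _.
  replace (e2pi (th1 n) * f (iter_map n T y) - e2pi (th2 n) * f (iter_map n T y))%C
    with ((e2pi (th1 n) - e2pi (th2 n)) * f (iter_map n T y))%C by ring.
  rewrite Cmod_mult. apply Rmult_le_compat; auto using Cmod_ge_0, Cmod_e2pi_sub.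
Qed.

End TwistedSums.

Lemma Cmod_twisted_sum_sub_point {X} (T : X -> X) f th y y' N :
  Cmod (twisted_sum T f th y N - twisted_sum T f th y' N)%C <=
  sumR (fun n => Cmod (f (iter_map n T y) - f (iter_map n T y'))%C) N.
Proof.
  unfold twisted_sum. rewrite <- csum_minus.
  eapply Rle_trans; [apply Cmod_csum_le|]. apply Req_le, sumR_ext. intros n _.
  replace (e2pi (th n) * f (iter_map n T y) - e2pi (th n) * f (iter_map n T y'))%C
    with (e2pi (th n) * (f (iter_map n T y) - f (iter_map n T y')))%C by ring.
  now rewrite Cmod_mult, Cmod_e2pi, Rmult_1_l.
Qed.

Definition is_poly (K : nat) (phi : R -> R) : Prop := exists c, forall t, phi t = poly_eval c K t.

Lemma is_poly_ext K phi psi : (forall t, phi t = psi t) -> is_poly K phi -> is_poly K psi.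
Proof. intros E [c Hc]. exists c. intros t. rewrite <- E. apply Hc. Qed.

Lemma poly_eval_ext c c' K t :
  (forall j, (j < K)%nat -> c j = c' j) -> poly_eval c K t = poly_eval c' K t.
Proof.
  induction K as [|K IH]; intros Hc; simpl; [reflexivity|].
  rewrite IH by (intros j Hj; apply Hc; lia). rewrite Hc by lia. reflexivity.
Qed.

Lemma is_polyD K phi psi : is_poly K phi -> is_poly K psi -> is_poly K (fun t => phi t + psi t).
Proof.
  intros [c Hc] [e He]. exists (fun j => c j + e j). intros t. rewrite Hc, He.
  clear. induction K as [|K IH]; simpl; [|rewrite <- IH]; ring.
Qed.

Lemma is_polyZ K r phi : is_poly K phi -> is_poly K (fun t => r * phi t).
Proof.
  intros [c Hc]. exists (fun j => r * c j). intros t. rewrite Hc.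
  clear. induction K as [|K IH]; simpl; [|rewrite <- IH]; ring.
Qed.

Lemma is_poly_S K phi : is_poly K phi -> is_poly (S K) phi.
Proof.
  intros [c Hc]. exists (fun j => if (j <? K)%nat then c j else 0). intros t. rewrite Hc. simpl.
  rewrite Nat.ltb_irrefl, Rmult_0_l, Rplus_0_r. apply poly_eval_ext.
  intros j Hj. apply Nat.ltb_lt in Hj. now rewrite Hj.
Qed.

Lemma is_polyMX K phi : is_poly K phi -> is_poly (S K) (fun t => t * phi t).
Proof.
  intros [c Hc]. exists (fun j => match j with O => 0 | S j' => c j' end). intros t. rewrite Hc.
  clear. induction K as [|K IH]; simpl in *; [|rewrite <- IH]; ring.
Qed.

Lemma is_poly_monomial K r : is_poly (S K) (fun t => r * t ^ K).
Proof.
  induction K as [|K IH].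
  - exists (fun _ => r). intros t. simpl. ring.
  - eapply is_poly_ext; [|apply is_polyMX, IH]. intros t. simpl. ring.
Qed.

Lemma is_poly_binomial K a : is_poly K (fun t => (t + a) ^ K - t ^ K).
Proof.
  induction K as [|K IH].
  - exists (fun _ => 0). intros t. simpl. ring.
  - eapply is_poly_ext; [|apply is_polyD; [apply is_polyMX, IH|apply is_polyD;
      [apply is_poly_S, (is_polyZ K a), IH|apply (is_poly_monomial K a)]]].
    intros t. simpl. ring.
Qed.

Lemma is_poly_shift_sub_lead K c a : is_poly K (fun t => poly_eval c (S K) (t + a) - c K * t ^ K).
Proof.
  induction K as [|K IH].
  - exists (fun _ => 0). intros t. simpl. ring.
  - eapply is_poly_ext; [|apply is_polyD; [apply is_poly_S, IH|apply is_polyD;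
      [apply (is_poly_monomial K (c K))
      |apply (is_polyZ (S K) (c (S K))), (is_poly_binomial (S K) a)]]].
    intros t. change (poly_eval c (S (S K)) (t + a))
      with (poly_eval c K (t + a) + c K * (t + a) ^ K + c (S K) * (t + a) ^ S K).
    simpl. ring.
Qed.

Lemma poly_eval_shift K c a :
  exists c', forall t, poly_eval c (S K) (t + a) = c K * t ^ K + poly_eval c' K t.
Proof.
  destruct (is_poly_shift_sub_lead K c a) as [c' Hc']. exists c'. intros t. rewrite <- Hc'. ring.
Qed.

Definition continuous_cfun {X : Type} (d : X -> X -> R) (f : X -> C) : Prop :=
  forall x eps, eps > 0 -> exists delta, delta > 0 /\
    forall y, d x y < delta -> Cmod (f x - f y)%C < eps.

Section MetricSpace.

Context {X : Type} {d : X -> X -> R}.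

Lemma continuous_fun_const r : continuous_fun d (fun _ => r).
Proof.
  intros x eps Heps. exists 1. split; [lra|]. intros y _.
  rewrite Rminus_diag, Rabs_R0. exact Heps.
Qed.

Lemma continuous_fun_op2 (op : R -> R -> R) f g :
  (forall a b a' b', Rabs (op a b - op a' b') <= Rabs (a - a') + Rabs (b - b')) ->
  continuous_fun d f -> continuous_fun d g -> continuous_fun d (fun y => op (f y) (g y)).
Proof.
  intros Hop Hf Hg x eps Heps.
  destruct (Hf x (eps / 2)) as [df [Hdf Hf']]; [lra|].
  destruct (Hg x (eps / 2)) as [dg [Hdg Hg']]; [lra|].
  exists (Rmin df dg). split; [now apply Rmin_pos|]. intros y Hy.
  apply Rmin_Rgt in Hy as [Hyf Hyg].
  specialize (Hf' y Hyf). specialize (Hg' y Hyg). specialize (Hop (f x) (g x) (f y) (g y)). lra.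
Qed.

Lemma continuous_fun_plus f g :
  continuous_fun d f -> continuous_fun d g -> continuous_fun d (fun y => f y + g y).
Proof.
  apply (continuous_fun_op2 Rplus). intros a b a' b'.
  replace (a + b - (a' + b')) with ((a - a') + (b - b')) by ring. apply Rabs_triang.
Qed.

Lemma continuous_fun_minus f g :
  continuous_fun d f -> continuous_fun d g -> continuous_fun d (fun y => f y - g y).
Proof.
  apply (continuous_fun_op2 Rminus). intros a b a' b'.
  replace (a - b - (a' - b')) with ((a - a') + - (b - b')) by ring.
  rewrite <- (Rabs_Ropp (b - b')). apply Rabs_triang.
Qed.

Lemma Rabs_Rmax_sub_le a b a' b' : Rabs (Rmax a b - Rmax a' b') <= Rabs (a - a') + Rabs (b - b').
Proof.
  pose proof (Rabs_pos (a - a')). pose proof (Rabs_pos (b - b')).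
  pose proof (Rle_abs (a - a')). pose proof (Rabs_maj2 (a - a')).
  pose proof (Rle_abs (b - b')). pose proof (Rabs_maj2 (b - b')).
  apply Rabs_le_between. unfold Rmax.
  destruct (Rle_dec a b), (Rle_dec a' b'); lra.
Qed.

Lemma continuous_fun_max f g :
  continuous_fun d f -> continuous_fun d g -> continuous_fun d (fun y => Rmax (f y) (g y)).
Proof. apply continuous_fun_op2, Rabs_Rmax_sub_le. Qed.

Lemma continuous_fun_min f g :
  continuous_fun d f -> continuous_fun d g -> continuous_fun d (fun y => Rmin (f y) (g y)).
Proof.
  apply continuous_fun_op2. intros a b a' b'.
  rewrite <- (Ropp_involutive a), <- (Ropp_involutive b), <- (Ropp_involutive a'),
    <- (Ropp_involutive b'), !Rmin_opp_Rmax.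
  replace (- Rmax (- a) (- b) - - Rmax (- a') (- b'))
    with (- (Rmax (- a) (- b) - Rmax (- a') (- b'))) by ring.
  rewrite Rabs_Ropp, !Ropp_involutive.
  replace (a - a') with (- (- a - - a')) by ring. replace (b - b') with (- (- b - - b')) by ring.
  rewrite !Rabs_Ropp. apply Rabs_Rmax_sub_le.
Qed.

Lemma continuous_fun_sumR (h : nat -> X -> R) n : (forall j, continuous_fun d (h j)) ->
  continuous_fun d (fun y => sumR (fun j => h j y) n).
Proof.
  intros Hh. induction n as [|n IH]; simpl.
  - apply continuous_fun_const.
  - now apply (continuous_fun_plus (fun y => sumR (fun j => h j y) n) (h n)).
Qed.

Lemma continuous_map_iter T n : continuous_map d T -> continuous_map d (iter_map n T).
Proof.
  intros HT. induction n as [|n IH]; simpl.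
  - intros x eps Heps. exists eps. now split.
  - intros x eps Heps. destruct (HT (iter_map n T x) eps Heps) as [d1 [Hd1 H1]].
    destruct (IH x d1 Hd1) as [d2 [Hd2 H2]]. exists d2. split; [exact Hd2|]. auto.
Qed.

Lemma continuous_cfun_pair fr fi :
  continuous_fun d fr -> continuous_fun d fi -> continuous_cfun d (fun y => (fr y, fi y)).
Proof.
  intros Hr Hi x eps Heps.
  destruct (Hr x (eps / 2)) as [dr [Hdr Hr']]; [lra|].
  destruct (Hi x (eps / 2)) as [di [Hdi Hi']]; [lra|].
  exists (Rmin dr di). split; [now apply Rmin_pos|]. intros y Hy.
  apply Rmin_Rgt in Hy as [Hyr Hyi].
  eapply Rle_lt_trans; [apply Cmod_le_Rabs_re_im|]. simpl.
  specialize (Hr' y Hyr). specialize (Hi' y Hyi). unfold Rminus in *. lra.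
Qed.

Lemma continuous_cfun_iter_finite T (f : X -> C) M :
  continuous_map d T -> continuous_cfun d f ->
  forall x eps, eps > 0 -> exists delta, delta > 0 /\ forall y, d x y < delta ->
    forall n, (n < M)%nat -> Cmod (f (iter_map n T x) - f (iter_map n T y))%C < eps.
Proof.
  intros HT Hf x eps Heps. induction M as [|M IH].
  - exists 1. split; [lra|]. intros y _ n Hn. lia.
  - destruct IH as [d1 [Hd1 H1]].
    destruct (Hf (iter_map M T x) eps Heps) as [d2 [Hd2 H2]].
    destruct (continuous_map_iter T M HT x d2 Hd2) as [d3 [Hd3 H3]].
    exists (Rmin d1 d3). split; [now apply Rmin_pos|]. intros y Hy n Hn.
    apply Rmin_Rgt in Hy as [Hy1 Hy3].
    destruct (Nat.eq_dec n M) as [->|HnM]; [auto|]. apply H1; [exact Hy1|lia].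
Qed.

Hypotheses (Hmetric : is_metric d) (Hcompact : metric_compact d).

Lemma subsequence_ge (phi : nat -> nat) :
  (forall n, (phi n < phi (S n))%nat) -> forall n, (n <= phi n)%nat.
Proof. intros Hphi n. induction n as [|n IH]; [lia|]. specialize (Hphi n). lia. Qed.

Lemma continuous_fun_bounded h : continuous_fun d h -> exists B, forall y, Rabs (h y) <= B.
Proof.
  intros Hh. apply NNPP. intros Hunb.
  assert (Hbig : forall n : nat, exists y, INR n < Rabs (h y)).
  { intros n. apply NNPP. intros Hn. apply Hunb. exists (INR n). intros y.
    apply Rnot_lt_le. intros Hy. apply Hn. now exists y. }
  destruct (choice _ Hbig) as [u Hu].
  destruct (Hcompact u) as [phi [l [Hphi Hconv]]].
  destruct (Hh l 1) as [dl [Hdl Hl]]; [lra|].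
  destruct (Hconv dl Hdl) as [I HI].
  destruct (INR_unbounded (Rabs (h l) + 1)) as [n0 Hn0].
  set (i := Nat.max I n0).
  assert (Hd : d l (u (phi i)) < dl).
  { destruct Hmetric as [_ [_ [Hsym _]]]. rewrite Hsym. apply HI. unfold i. lia. }
  specialize (Hl _ Hd). specialize (Hu (phi i)).
  assert (Hn0i : INR n0 <= INR (phi i)).
  { apply le_INR. pose proof (subsequence_ge phi Hphi i). unfold i in *. lia. }
  pose proof (Rabs_triang_inv (h (u (phi i))) (h l)). rewrite Rabs_minus_sym in Hl. lra.
Qed.

Lemma dini (Z : nat -> X -> R) th :
  (forall n, continuous_fun d (Z n)) -> (forall n y, Z (S n) y <= Z n y) ->
  (forall y, exists n, Z n y < th) -> exists n, forall y, Z n y < th.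
Proof.
  intros HZ Hdec Hpt. apply NNPP. intros Hnot.
  assert (Hmono : forall n m y, (n <= m)%nat -> Z m y <= Z n y).
  { intros n m y Hnm. induction Hnm as [|m _ IH]; [lra|]. specialize (Hdec m y). lra. }
  assert (Hbad : forall n, exists y, th <= Z n y).
  { intros n. apply NNPP. intros Hn. apply Hnot. exists n. intros y.
    apply Rnot_le_lt. intros Hy. apply Hn. now exists y. }
  destruct (choice _ Hbad) as [u Hu].
  destruct (Hcompact u) as [phi [l [Hphi Hconv]]].
  destruct (Hpt l) as [n0 Hn0].
  destruct (HZ n0 l (th - Z n0 l)) as [dl [Hdl Hl]]; [lra|].
  destruct (Hconv dl Hdl) as [I HI].
  set (i := Nat.max I n0).
  assert (Hd : d l (u (phi i)) < dl).
  { destruct Hmetric as [_ [_ [Hsym _]]]. rewrite Hsym. apply HI. unfold i. lia. }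
  specialize (Hl _ Hd).
  assert (Hle : Z (phi i) (u (phi i)) <= Z n0 (u (phi i))).
  { apply Hmono. pose proof (subsequence_ge phi Hphi i). unfold i in *. lia. }
  specialize (Hu (phi i)). pose proof (Rabs_maj2 (Z n0 l - Z n0 (u (phi i)))). lra.
Qed.

End MetricSpace.

Definition supR {I : Type} (F : I -> R) : R :=
  epsilon (inhabits 0) (is_lub (fun r => exists i, r = F i)).

Lemma supR_is_lub {I : Type} (F : I -> R) B (i0 : I) :
  (forall i, F i <= B) -> is_lub (fun r => exists i, r = F i) (supR F).
Proof.
  intros HB. unfold supR. apply epsilon_spec.
  destruct (completeness (fun r => exists i, r = F i)) as [s Hs].
  - exists B. intros r [i ->]. apply HB.
  - exists (F i0). now exists i0.
  - now exists s.
Qed.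

Lemma supR_ub {I : Type} (F : I -> R) B i : (forall i, F i <= B) -> F i <= supR F.
Proof. intros HB. apply (supR_is_lub F B i HB). now exists i. Qed.

Lemma supR_le {I : Type} (F : I -> R) b (i0 : I) : (forall i, F i <= b) -> supR F <= b.
Proof. intros Hb. apply (supR_is_lub F b i0 Hb). intros r [i ->]. apply Hb. Qed.

Lemma Rabs_supR_sub_le {I : Type} (F G : I -> R) B e (i0 : I) :
  (forall i, F i <= B) -> (forall i, G i <= B) -> (forall i, Rabs (F i - G i) <= e) ->
  Rabs (supR F - supR G) <= e.
Proof.
  intros HF HG HFG. apply Rabs_le_between'. split.
  - cut (supR G <= supR F + e); [lra|]. apply (supR_le _ _ i0). intros i.
    pose proof (supR_ub F B i HF). specialize (HFG i). apply Rabs_le_between' in HFG. lra.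
  - apply (supR_le _ _ i0). intros i.
    pose proof (supR_ub G B i HG). specialize (HFG i). apply Rabs_le_between' in HFG. lra.
Qed.

Lemma exists_near_sup (F : nat -> R) B t : (forall l, F l <= B) -> 0 < t ->
  exists l, forall l', F l' <= F l + t.
Proof.
  intros HB Ht. apply NNPP. intros Hnot.
  assert (Hub : supR F <= supR F - t); [|lra].
  apply (supR_le _ _ O). intros l. apply Rnot_lt_le. intros Hl.
  apply Hnot. exists l. intros l'. pose proof (supR_ub F B l' HB). lra.
Qed.

Lemma sumR_geometric_half r n : sumR (fun j => r * (/ 2) ^ j) n = 2 * r - 2 * r * (/ 2) ^ n.
Proof. induction n as [|n IH]; simpl sumR; [simpl|rewrite IH; simpl]; field. Qed.

Fixpoint window_max (v : nat -> R) (j l : nat) : R :=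
  match l with O => v j | S l' => Rmax (window_max v j l') (v (j + S l')%nat) end.

Lemma le_window_max v j l i : (i <= l)%nat -> v (j + i)%nat <= window_max v j l.
Proof.
  induction l as [|l IH]; simpl; intros Hi.
  - replace i with O by lia. rewrite Nat.add_0_r. lra.
  - destruct (Nat.eq_dec i (S l)) as [->|Hne]; [apply Rmax_r|].
    eapply Rle_trans; [apply IH; lia|apply Rmax_l].
Qed.

Lemma window_max_le v j l b :
  (forall i, (i <= l)%nat -> v (j + i)%nat <= b) -> window_max v j l <= b.
Proof.
  induction l as [|l IH]; simpl; intros Hb.
  - rewrite <- (Nat.add_0_r j). apply Hb. lia.
  - apply Rmax_lub; [apply IH; intros i Hi|]; apply Hb; lia.
Qed.

Lemma window_max_mono v j l l' : (l <= l')%nat -> window_max v j l <= window_max v j l'.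
Proof. intros Hl. apply window_max_le. intros i Hi. apply le_window_max. lia. Qed.

Lemma window_max_shift v j n l : (j <= n)%nat -> window_max v n l <= window_max v j (n - j + l).
Proof.
  intros Hjn. apply window_max_le. intros i Hi.
  replace (n + i)%nat with (j + (n - j + i))%nat by lia. apply le_window_max. lia.
Qed.

Fixpoint prefix_min (a : nat -> R) (n : nat) : R :=
  match n with O => a O | S m => Rmin (prefix_min a m) (a (S m)) end.

Lemma prefix_min_le a n j : (j <= n)%nat -> prefix_min a n <= a j.
Proof.
  induction n as [|n IH]; simpl; intros Hj.
  - replace j with O by lia. lra.
  - destruct (Nat.eq_dec j (S n)) as [->|Hne]; [apply Rmin_r|].
    eapply Rle_trans; [apply Rmin_l|apply IH; lia].
Qed.

Lemma sub_prefix_min_le (a b : nat -> R) v n :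
  (forall j, (j <= n)%nat -> v <= b j /\ a j <= b j) ->
  v - prefix_min a n <= sumR (fun j => b j - a j) (S n).
Proof.
  induction n as [|n IH]; intros Hab.
  - simpl. destruct (Hab O) as [Hv _]; [lia|]. lra.
  - assert (IH' := IH (fun j Hj => Hab j (Nat.le_le_succ_r _ _ Hj))).
    destruct (Hab (S n)) as [Hv Hn]; [lia|].
    assert (Hpos : 0 <= sumR (fun j => b j - a j) (S n)).
    { rewrite <- (Rmult_0_r (INR (S n))), <- sumR_const. apply sumR_le.
      intros j Hj. destruct (Hab j) as [_ Hj']; [lia|]. lra. }
    change (sumR (fun j => b j - a j) (S (S n)))
      with (sumR (fun j => b j - a j) (S n) + (b (S n) - a (S n))).
    simpl prefix_min. unfold Rmin. destruct (Rle_dec (prefix_min a n) (a (S n))); lra.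
Qed.

Definition positive_state {X : Type} (d : X -> X -> R) (L : (X -> R) -> R) : Prop :=
  (forall f g a b, continuous_fun d f -> continuous_fun d g ->
     L (fun x => a * f x + b * g x) = a * L f + b * L g) /\
  (forall f, continuous_fun d f -> (forall x, 0 <= f x) -> 0 <= L f) /\
  L (fun _ => 1) = 1.

Lemma invariant_state_positive {X} (d : X -> X -> R) T L :
  invariant_state d T L -> positive_state d L.
Proof. intros [Hlin [Hpos [H1 _]]]. now repeat split. Qed.

Section PositiveState.

Context {X : Type} {d : X -> X -> R} {L : (X -> R) -> R} (HL : positive_state d L).

Lemma state_ext f g : (forall y, f y = g y) -> L f = L g.
Proof. intros Hfg. f_equal. now apply functional_extensionality. Qed.

Lemma state_plus f g : continuous_fun d f -> continuous_fun d g ->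
  L (fun y => f y + g y) = L f + L g.
Proof.
  intros Hf Hg. destruct HL as [Hlin _].
  rewrite (state_ext _ (fun y => 1 * f y + 1 * g y)) by (intros; ring).
  rewrite Hlin by assumption. ring.
Qed.

Lemma state_minus f g : continuous_fun d f -> continuous_fun d g ->
  L (fun y => f y - g y) = L f - L g.
Proof.
  intros Hf Hg. destruct HL as [Hlin _].
  rewrite (state_ext _ (fun y => 1 * f y + -1 * g y)) by (intros; ring).
  rewrite Hlin by assumption. ring.
Qed.

Lemma state_const r : L (fun _ => r) = r.
Proof.
  destruct HL as [Hlin [_ H1]].
  rewrite (state_ext _ (fun y => r * 1 + 0 * 1)) by (intros; ring).
  rewrite (Hlin (fun _ => 1) (fun _ => 1)) by apply continuous_fun_const. rewrite H1. ring.
Qed.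

Lemma state_le f g : continuous_fun d f -> continuous_fun d g ->
  (forall y, f y <= g y) -> L f <= L g.
Proof.
  intros Hf Hg Hfg. destruct HL as [_ [Hpos _]].
  assert (H : 0 <= L (fun y => g y - f y)).
  { apply Hpos; [now apply continuous_fun_minus|]. intros y. specialize (Hfg y). lra. }
  rewrite state_minus in H by assumption. lra.
Qed.

Lemma state_sumR (h : nat -> X -> R) n : (forall j, continuous_fun d (h j)) ->
  L (fun y => sumR (fun j => h j y) n) = sumR (fun j => L (h j)) n.
Proof.
  intros Hh. induction n as [|n IH]; simpl; [apply state_const|].
  rewrite (state_plus (fun y => sumR (fun j => h j y) n) (h n)), IH;
    auto using continuous_fun_sumR.
Qed.

Section Windows.

Variables (g : nat -> X -> R) (ls : nat -> nat) (t : nat -> R).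
Hypothesis g_continuous : forall M, continuous_fun d (g M).

Let W j l y := window_max (fun i => g i y) j l.
Let a j := W j (ls j).
Let lo n y := prefix_min (fun j => a j y) n.

Lemma continuous_window_max j l : continuous_fun d (W j l).
Proof.
  unfold W. induction l as [|l IH]; simpl; [apply g_continuous|].
  now apply (continuous_fun_max (fun y => window_max (fun i => g i y) j l)).
Qed.

Lemma continuous_prefix_min_windows n : continuous_fun d (lo n).
Proof.
  unfold lo. induction n as [|n IH]; simpl; [apply continuous_window_max|].
  apply (continuous_fun_min (fun y => prefix_min (fun j => a j y) n)); [exact IH|].
  apply continuous_window_max.
Qed.

Lemma state_sub_prefix_min_windows n :
  (forall j l, L (W j l) <= L (a j) + t j) -> L (a n) - L (lo n) <= sumR t (S n).
Proof.
  intros Hnear.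
  set (b j := W j (Nat.max (ls j) (n - j + ls n))).
  assert (Hpw : forall y, a n y - lo n y <= sumR (fun j => b j y - a j y) (S n)).
  { intros y. apply sub_prefix_min_le. intros j Hj. split.
    - eapply Rle_trans; [apply (window_max_shift _ j n); exact Hj|]. apply window_max_mono. lia.
    - apply window_max_mono. lia. }
  assert (Hcont : forall j, continuous_fun d (fun y => b j y - a j y)).
  { intros j. apply continuous_fun_minus; apply continuous_window_max. }
  rewrite <- state_minus by (apply continuous_window_max || apply continuous_prefix_min_windows).
  eapply Rle_trans.
  { apply (state_le _ (fun y => sumR (fun j => b j y - a j y) (S n))); [| |exact Hpw].
    - apply continuous_fun_minus; [apply continuous_window_max|apply continuous_prefix_min_windows].
    - now apply (continuous_fun_sumR (fun j y => b j y - a j y)). }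
  rewrite (state_sumR (fun j y => b j y - a j y)) by exact Hcont.
  apply sumR_le. intros j _. rewrite state_minus by apply continuous_window_max.
  specialize (Hnear j (Nat.max (ls j) (n - j + ls n))). unfold b. lra.
Qed.

End Windows.

Hypotheses (Hmetric : is_metric d) (Hcompact : metric_compact d).

(** Daniell's argument: if [L (g M) > e] for all [M], running minima of nearly optimal
    finite windows of the [g M] are continuous, decreasing and keep mass [3e/4], so by
    Dini they stay above [e/2] at some point, where [g M] cannot tend to [0]. *)
Lemma state_pointwise_null (g : nat -> X -> R) B :
  (forall M, continuous_fun d (g M)) -> (forall M y, g M y <= B) ->
  (forall y e, e > 0 -> exists M0, forall M, (M0 <= M)%nat -> g M y <= e) ->
  forall e, e > 0 -> exists M, L (g M) <= e.
Proof.
  intros Hg HB Hpt e He. apply NNPP. intros Hnot.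
  assert (HgL : forall M, e < L (g M)).
  { intros M. apply Rnot_le_lt. intros HM. apply Hnot. now exists M. }
  set (W j l y := window_max (fun i => g i y) j l).
  set (t j := e / 8 * (/ 2) ^ j).
  assert (Hnear : forall j, exists l, forall l', L (W j l') <= L (W j l) + t j).
  { intros j. apply (exists_near_sup _ B).
    - intros l. rewrite <- (state_const B).
      apply state_le; [apply continuous_window_max, Hg|apply continuous_fun_const|].
      intros y. apply window_max_le. intros i _. apply HB.
    - unfold t. apply Rmult_lt_0_compat; [lra|apply pow_lt; lra]. }
  destruct (choice _ Hnear) as [ls Hls].
  set (a j := W j (ls j)). set (lo n y := prefix_min (fun j => a j y) n).
  assert (Hlo : forall n, 3 * e / 4 <= L (lo n)).
  { intros n. pose proof (state_sub_prefix_min_windows g ls t Hg n Hls) as Hgap.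
    assert (L (g n) <= L (a n)).
    { apply state_le; [apply Hg|apply continuous_window_max, Hg|]. intros y.
      rewrite <- (Nat.add_0_r n) at 1. apply (le_window_max (fun i => g i y)). lia. }
    assert (sumR t (S n) <= e / 4).
    { unfold t. rewrite sumR_geometric_half.
      assert (0 <= (/ 2) ^ S n) by (apply pow_le; lra). nra. }
    change (L (a n) - L (lo n) <= sumR t (S n)) in Hgap. specialize (HgL n). lra. }
  assert (Hy : exists y, forall n, e / 2 <= lo n y).
  { apply NNPP. intros Hno.
    destruct (dini Hmetric Hcompact lo (e / 2)) as [n Hn].
    - apply continuous_prefix_min_windows, Hg.
    - intros n y. apply Rmin_l.
    - intros y. apply NNPP. intros Hy. apply Hno. exists y. intros n.
      apply Rnot_lt_le. intros Hn. apply Hy. now exists n.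
    - assert (L (lo n) <= e / 2); [|specialize (Hlo n); lra].
      rewrite <- (state_const (e / 2)).
      apply state_le; [apply continuous_prefix_min_windows, Hg|apply continuous_fun_const|].
      intros y. left. apply Hn. }
  destruct Hy as [y Hy]. destruct (Hpt y (e / 4)) as [M0 HM0]; [lra|].
  assert (lo M0 y <= a M0 y) by (apply (prefix_min_le (fun j => a j y)); lia).
  assert (a M0 y <= e / 4) by (apply window_max_le; intros i _; apply HM0; lia).
  specialize (Hy M0). lra.
Qed.

End PositiveState.

Record free_ultrafilter (U : (nat -> Prop) -> Prop) : Prop := {
  uf_mono : forall A B : nat -> Prop, (forall n, A n -> B n) -> U A -> U B;
  uf_and : forall A B, U A -> U B -> U (fun n => A n /\ B n);
  uf_proper : ~ U (fun _ => False);
  uf_ultra : forall A, U A \/ U (fun n => ~ A n);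
  uf_tail : forall n0, U (fun n => (n0 <= n)%nat) }.

Module NatUltrafilter.
Import mathcomp.boot.ssreflect mathcomp.classical.boolp mathcomp.classical.classical_sets
  mathcomp.classical.filter.

Lemma free_ultrafilter_frequently (S : nat -> Prop) :
  (forall n, exists m, (n <= m)%nat /\ S m) -> exists U, free_ultrafilter U /\ U S.
Proof.
move=> HS.
pose F := fun A : set nat => exists n0, forall n, (n0 <= n)%nat -> S n -> A n.
have FF : ProperFilter F.
  apply: Build_ProperFilter.
    move=> [n0 H]; have [m [Hm Sm]] := HS n0; exact: (H m Hm Sm).
  split.
  - by exists 0%nat.
  - move=> A B [a Ha] [b Hb]; exists (Nat.max a b) => n Hn Sn; split.
      apply: Ha => //; exact: (Nat.le_trans _ _ _ (Nat.le_max_l a b) Hn).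
    apply: Hb => //; exact: (Nat.le_trans _ _ _ (Nat.le_max_r a b) Hn).
  - move=> A B AB [a Ha]; exists a => n Hn Sn; exact/AB/Ha.
have [G [GU FG]] := ultraFilterLemma FF.
exists G; split; last by apply: FG; exists 0%nat.
split.
- move=> A B AB GA; apply: filterS GA; exact: AB.
- move=> A B GA GB; exact: filterI.
- exact: filter_not_empty.
- move=> A; exact: in_ultra_setVsetC.
- move=> n0; apply: FG; by exists n0.
Qed.

End NatUltrafilter.

Definition ulim_is (U : (nat -> Prop) -> Prop) (a : nat -> R) (l : R) : Prop :=
  forall e, e > 0 -> U (fun n => Rabs (a n - l) < e).

Definition Ulim (U : (nat -> Prop) -> Prop) (a : nat -> R) : R :=
  epsilon (inhabits 0) (ulim_is U a).

Section UltrafilterLimits.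

Variables (U : (nat -> Prop) -> Prop) (HU : free_ultrafilter U).

Lemma uf_always (A : nat -> Prop) : (forall n, A n) -> U A.
Proof. intros HA. apply (uf_mono _ HU (fun n => (0 <= n)%nat)); [auto|apply (uf_tail _ HU)]. Qed.

Lemma ulim_unique a l l' : ulim_is U a l -> ulim_is U a l' -> l = l'.
Proof.
  intros Hl Hl'. apply NNPP. intros Hne.
  set (e := Rabs (l - l') / 2).
  assert (He : e > 0) by (unfold e; assert (0 < Rabs (l - l')) by (apply Rabs_pos_lt; lra); lra).
  apply (uf_proper _ HU).
  apply (uf_mono _ HU (fun n => Rabs (a n - l) < e /\ Rabs (a n - l') < e));
    [|apply (uf_and _ HU); [apply Hl|apply Hl']; exact He].
  intros n [H1 H2]. pose proof (Rabs_triang (l - a n) (a n - l')).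
  rewrite Rabs_minus_sym in H1. replace (l - a n + (a n - l')) with (l - l') in * by ring.
  unfold e in *. lra.
Qed.

Lemma ulim_exists a B : (forall n, Rabs (a n) <= B) -> exists l, ulim_is U a l.
Proof.
  intros HB.
  set (E r := U (fun n => r <= a n)).
  destruct (completeness E) as [l [Hub Hlub]].
  - exists (B + 1). intros r Hr. apply Rnot_lt_le. intros Hlt. apply (uf_proper _ HU).
    apply (uf_mono _ HU (fun n => r <= a n)); [|exact Hr].
    intros n Hn. specialize (HB n). apply Rabs_le_between in HB. lra.
  - exists (- B). apply uf_always. intros n. specialize (HB n). apply Rabs_le_between in HB. lra.
  - exists l. intros e He.
    assert (Hlow : exists r, E r /\ l - e < r).
    { apply NNPP. intros Hno. assert (l <= l - e); [|lra].
      apply Hlub. intros r Hr. apply Rnot_lt_le. intros Hlt. apply Hno. now exists r. }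
    destruct Hlow as [r [Hr Hrl]].
    assert (Hhigh : ~ E (l + e / 2)) by (intros H; specialize (Hub _ H); lra).
    destruct (uf_ultra _ HU (fun n => l + e / 2 <= a n)) as [H|H]; [contradiction|].
    apply (uf_mono _ HU (fun n => r <= a n /\ ~ (l + e / 2 <= a n))); [|now apply (uf_and _ HU)].
    intros n [H1 H2]. apply Rabs_def1; lra.
Qed.

Lemma Ulim_eq a l : ulim_is U a l -> Ulim U a = l.
Proof.
  intros Hl. apply (ulim_unique a); [|exact Hl].
  unfold Ulim. apply epsilon_spec. now exists l.
Qed.

Lemma ulim_lin a b la lb r s : ulim_is U a la -> ulim_is U b lb ->
  ulim_is U (fun n => r * a n + s * b n) (r * la + s * lb).
Proof.
  intros Ha Hb e He.
  set (ea := e / (2 * (Rabs r + 1))). set (eb := e / (2 * (Rabs s + 1))).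
  assert (Hr := Rabs_pos r). assert (Hs := Rabs_pos s).
  apply (uf_mono _ HU (fun n => Rabs (a n - la) < ea /\ Rabs (b n - lb) < eb));
    [|apply (uf_and _ HU); [apply Ha|apply Hb]; apply Rdiv_lt_0_compat; lra].
  intros n [H1 H2].
  replace (r * a n + s * b n - (r * la + s * lb)) with (r * (a n - la) + s * (b n - lb)) by ring.
  eapply Rle_lt_trans; [apply Rabs_triang|]. rewrite !Rabs_mult.
  assert ((Rabs r + 1) * ea = e / 2) by (unfold ea; field; lra).
  assert ((Rabs s + 1) * eb = e / 2) by (unfold eb; field; lra).
  assert ((Rabs r + 1) * Rabs (a n - la) < (Rabs r + 1) * ea) by (apply Rmult_lt_compat_l; lra).
  assert ((Rabs s + 1) * Rabs (b n - lb) < (Rabs s + 1) * eb) by (apply Rmult_lt_compat_l; lra).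
  pose proof (Rabs_pos (a n - la)). pose proof (Rabs_pos (b n - lb)). lra.
Qed.

Lemma ulim_ge a l b : ulim_is U a l -> U (fun n => b <= a n) -> b <= l.
Proof.
  intros Hl Hb. apply Rnot_lt_le. intros Hlt. apply (uf_proper _ HU).
  apply (uf_mono _ HU (fun n => Rabs (a n - l) < b - l /\ b <= a n));
    [|apply (uf_and _ HU); [apply Hl; lra|exact Hb]].
  intros n [H1 H2]. apply Rabs_lt_between' in H1. lra.
Qed.

Lemma ulim_of_tendsto a l :
  (forall e, e > 0 -> exists n0, forall n, (n0 <= n)%nat -> Rabs (a n - l) < e) -> ulim_is U a l.
Proof.
  intros Ha e He. destruct (Ha e He) as [n0 Hn0].
  apply (uf_mono _ HU (fun n => (n0 <= n)%nat)); [exact Hn0|apply (uf_tail _ HU)].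
Qed.

End UltrafilterLimits.

Lemma div_INR_eventually_lt c e : 0 < e -> exists n0, forall n, (n0 <= n)%nat -> c / INR n < e.
Proof.
  intros He. destruct (INR_unbounded (Rabs c / e)) as [m Hm]. exists (S m). intros n Hn.
  assert (HmN : INR m < INR n) by (apply lt_INR; lia).
  assert (Hc : Rabs c < e * INR n).
  { apply Rlt_div_l in Hm; [|exact He]. pose proof (pos_INR m). nra. }
  apply Rlt_div_l; [pose proof (pos_INR m); lra|].
  pose proof (Rle_abs c). lra.
Qed.

Section BirkhoffAverages.

Context {X : Type} (T : X -> X) (x : X).

Definition birkhoff_avg (h : X -> R) (N : nat) : R := sumR (fun n => h (iter_map n T x)) N / INR N.

Lemma birkhoff_avg_lin f g a b N :
  birkhoff_avg (fun y => a * f y + b * g y) N = a * birkhoff_avg f N + b * birkhoff_avg g N.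
Proof. unfold birkhoff_avg, Rdiv. rewrite sumR_plus, !sumR_scal. ring. Qed.

Lemma birkhoff_avg_const r N : (0 < N)%nat -> birkhoff_avg (fun _ => r) N = r.
Proof.
  intros HN. unfold birkhoff_avg. rewrite sumR_const. field. apply not_0_INR. lia.
Qed.

Lemma birkhoff_avg_bounds h a b N : (forall y, a <= h y <= b) -> (0 < N)%nat ->
  a <= birkhoff_avg h N <= b.
Proof.
  intros Hab HN. assert (HN' : 0 < INR N) by (apply lt_0_INR; exact HN). unfold birkhoff_avg.
  split.
  - apply Rle_div_r; [exact HN'|]. rewrite Rmult_comm, <- sumR_const.
    apply sumR_le. intros n _. apply Hab.
  - apply Rle_div_l; [exact HN'|]. rewrite Rmult_comm.
    apply sumR_le_const. intros n _. apply Hab.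
Qed.

Lemma birkhoff_avg_comp_sub h B N : (forall y, Rabs (h y) <= B) -> (0 < N)%nat ->
  Rabs (birkhoff_avg (fun y => h (T y)) N - birkhoff_avg h N) <= 2 * B / INR N.
Proof.
  intros HB HN. assert (HN' : 0 < INR N) by (apply lt_0_INR; exact HN). unfold birkhoff_avg.
  rewrite (sumR_shift1 (fun n => h (iter_map n T x))).
  replace ((sumR (fun n => h (iter_map n T x)) N + h (iter_map N T x) - h (iter_map 0 T x)) / INR N -
    sumR (fun n => h (iter_map n T x)) N / INR N) with ((h (iter_map N T x) - h x) / INR N)
    by (simpl; field; lra).
  unfold Rdiv. rewrite Rabs_mult, Rabs_inv, (Rabs_pos_eq (INR N)) by lra.
  apply Rmult_le_compat_r; [left; now apply Rinv_0_lt_compat|].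
  eapply Rle_trans; [apply Rabs_triang|]. rewrite Rabs_Ropp.
  pose proof (HB (iter_map N T x)). pose proof (HB x). lra.
Qed.

Lemma Rabs_birkhoff_avg_le h B N : (forall y, Rabs (h y) <= B) -> Rabs (birkhoff_avg h N) <= B.
Proof.
  intros HB. destruct N as [|N].
  - unfold birkhoff_avg, Rdiv. simpl. rewrite Rmult_0_l, Rabs_R0.
    eapply Rle_trans; [apply Rabs_pos|apply (HB x)].
  - apply Rabs_le_between, birkhoff_avg_bounds; [|lia]. intros y. now apply Rabs_le_between.
Qed.

Lemma ulim_is_Ulim_birkhoff_avg U h B : free_ultrafilter U -> (forall y, Rabs (h y) <= B) ->
  ulim_is U (birkhoff_avg h) (Ulim U (birkhoff_avg h)).
Proof.
  intros HU HB. destruct (ulim_exists U HU (birkhoff_avg h) B) as [l Hl].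
  - intros N. now apply Rabs_birkhoff_avg_le.
  - now rewrite (Ulim_eq U HU _ l Hl).
Qed.

Lemma ulim_birkhoff_invariant_state (d : X -> X -> R) U :
  free_ultrafilter U -> is_metric d -> metric_compact d ->
  invariant_state d T (fun h => Ulim U (birkhoff_avg h)).
Proof.
  intros HU Hm Hc.
  pose proof (fun h B => ulim_is_Ulim_birkhoff_avg U h B HU) as Hlim.
  split; [|split; [|split]].
  - intros f g a b Hf Hg. apply Ulim_eq; [exact HU|].
    destruct (continuous_fun_bounded Hm Hc f Hf) as [Bf HBf].
    destruct (continuous_fun_bounded Hm Hc g Hg) as [Bg HBg].
    replace (birkhoff_avg (fun y => a * f y + b * g y))
      with (fun N => a * birkhoff_avg f N + b * birkhoff_avg g N)
      by (apply functional_extensionality; intros N; now rewrite birkhoff_avg_lin).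
    apply ulim_lin; [exact HU|apply (Hlim f Bf HBf)|apply (Hlim g Bg HBg)].
  - intros f Hf Hpos. destruct (continuous_fun_bounded Hm Hc f Hf) as [B HB].
    apply (ulim_ge U HU (birkhoff_avg f)); [apply (Hlim f B HB)|].
    apply (uf_mono _ HU (fun n => (1 <= n)%nat)); [|apply (uf_tail _ HU)].
    intros n Hn. apply (birkhoff_avg_bounds f 0 (Rabs (f x) + B)); [|lia]. intros y.
    specialize (HB y). specialize (Hpos y). apply Rabs_le_between in HB.
    pose proof (Rabs_pos (f x)). lra.
  - apply Ulim_eq; [exact HU|]. apply (ulim_of_tendsto U HU).
    intros e He. exists 1%nat. intros n Hn.
    rewrite birkhoff_avg_const, Rminus_diag, Rabs_R0 by lia. exact He.
  - intros f Hf. destruct (continuous_fun_bounded Hm Hc f Hf) as [B HB].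
    apply Ulim_eq; [exact HU|].
    set (D N := birkhoff_avg (fun y => f (T y)) N - birkhoff_avg f N).
    replace (birkhoff_avg (fun y => f (T y))) with (fun N => 1 * birkhoff_avg f N + 1 * D N)
      by (apply functional_extensionality; intros N; unfold D; ring).
    replace (Ulim U (birkhoff_avg f)) with (1 * Ulim U (birkhoff_avg f) + 1 * 0) by ring.
    apply ulim_lin; [exact HU|apply (Hlim f B HB)|]. apply (ulim_of_tendsto U HU). intros e He.
    destruct (div_INR_eventually_lt (2 * B) e He) as [n0 Hn0]. exists (S n0). intros n Hn.
    rewrite Rminus_0_r. eapply Rle_lt_trans; [apply birkhoff_avg_comp_sub; [exact HB|lia]|].
    apply Hn0. lia.
Qed.

End BirkhoffAverages.

(** Otherwise a free-ultrafilter limit of the averages along the bad times would be an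
    invariant state different from [L]. *)
Lemma uniquely_ergodic_birkhoff_avg_le {X} (d : X -> X -> R) T L x G :
  is_metric d -> metric_compact d -> uniquely_ergodic d T -> invariant_state d T L ->
  continuous_fun d G -> forall e, e > 0 -> exists N0, forall N, (N0 <= N)%nat ->
  birkhoff_avg T x G N <= L G + e.
Proof.
  intros Hm Hc [_ Huniq] HL HG e He. apply NNPP. intros Hnot.
  assert (Hfreq : forall n, exists m, (n <= m)%nat /\ L G + e < birkhoff_avg T x G m).
  { intros n. apply NNPP. intros Hn. apply Hnot. exists n. intros N HN.
    apply Rnot_lt_le. intros HN'. apply Hn. now exists N. }
  destruct (NatUltrafilter.free_ultrafilter_frequently _ Hfreq) as [U [HU HUS]].
  pose proof (ulim_birkhoff_invariant_state T x d U HU Hm Hc) as HL'.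
  pose proof (Huniq _ _ HL' HL G HG) as Heq. simpl in Heq.
  destruct (continuous_fun_bounded Hm Hc G HG) as [B HB].
  assert (Hge : L G + e <= Ulim U (birkhoff_avg T x G)).
  { apply (ulim_ge U HU _ _ _ (ulim_is_Ulim_birkhoff_avg T x U G B HU HB)).
    apply (uf_mono _ HU _ _ (fun n Hn => Rlt_le _ _ Hn) HUS). }
  lra.
Qed.

Lemma Rabs_Cmod_sub_le (a b : C) : Rabs (Cmod a - Cmod b) <= Cmod (a - b)%C.
Proof.
  apply Rabs_le_between'. split.
  - pose proof (Cmod_triangle (b - a)%C a) as H.
    replace (b - a + a)%C with b in H by ring.
    replace (b - a)%C with (- (a - b))%C in H by ring. rewrite Cmod_opp in H. lra.
  - pose proof (Cmod_triangle (a - b)%C b) as H. replace (a - b + b)%C with a in H by ring. lra.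
Qed.

Lemma Rabs_twisted_avg_sub_le {X} (T : X -> X) f th y y' M :
  Rabs (twisted_avg T f th y M - twisted_avg T f th y' M) <=
  sumR (fun n => Cmod (f (iter_map n T y) - f (iter_map n T y'))%C) M / INR M.
Proof.
  unfold twisted_avg, Rdiv.
  rewrite <- Rmult_minus_distr_r, Rabs_mult, Rabs_inv, (Rabs_pos_eq (INR M)) by apply pos_INR.
  apply Rmult_le_compat_r.
  { destruct M; [simpl; rewrite Rinv_0; lra|left; apply Rinv_0_lt_compat, lt_0_INR; lia]. }
  eapply Rle_trans; [apply Rabs_Cmod_sub_le|apply Cmod_twisted_sum_sub_point].
Qed.

Lemma IZR_mul_pow_INR z h k : IZR z * INR h ^ k = IZR (z * Z.of_nat (h ^ k)).
Proof. now rewrite mult_IZR, <- INR_IZR_INZ, pow_INR. Qed.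

Definition phase (k : nat) (alpha : R) (c : nat -> R) (n : nat) : R :=
  INR n ^ k * alpha + poly_eval c k (INR n).

Section PolynomialPhases.

Variables (X : Type) (d : X -> X -> R) (T : X -> X) (f : X -> C) (B : R) (k : nat).
Hypotheses (Hmetric : is_metric d) (Hcompact : metric_compact d) (HT : continuous_map d T)
  (Hf : continuous_cfun d f) (HB0 : 0 <= B) (HB : forall y, Cmod (f y) <= B).

Definition sup_twisted_avg (alpha : R) (M : nat) (y : X) : R :=
  supR (fun c => twisted_avg T f (phase k alpha c) y M).

Lemma sup_twisted_avg_bounds alpha M y : 0 <= sup_twisted_avg alpha M y <= B.
Proof.
  assert (Hle : forall c, twisted_avg T f (phase k alpha c) y M <= B)
    by (intros c; apply (twisted_avg_bounds T HB _ _ _ HB0)).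
  split.
  - eapply Rle_trans; [|apply (supR_ub _ B (fun _ => 0) Hle)].
    apply (twisted_avg_bounds T HB _ _ _ HB0).
  - now apply (supR_le _ _ (fun _ => 0)).
Qed.

Lemma ge_sup_twisted_avg alpha M y c :
  twisted_avg T f (phase k alpha c) y M <= sup_twisted_avg alpha M y.
Proof.
  apply (supR_ub (fun c => twisted_avg T f (phase k alpha c) y M) B c).
  intros c'. apply (twisted_avg_bounds T HB _ _ _ HB0).
Qed.

Lemma continuous_sup_twisted_avg alpha M : continuous_fun d (sup_twisted_avg alpha M).
Proof.
  intros y e He.
  destruct (continuous_cfun_iter_finite T f M HT Hf y (e / 2)) as [delta [Hdelta Hnear]]; [lra|].
  exists delta. split; [exact Hdelta|]. intros y' Hy'.
  eapply Rle_lt_trans; [apply (Rabs_supR_sub_le _ _ B (e / 2) (fun _ => 0))|lra].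
  1, 2: intros c; apply (twisted_avg_bounds T HB _ _ _ HB0).
  intros c. eapply Rle_trans; [apply Rabs_twisted_avg_sub_le|].
  destruct M as [|M]; [simpl; unfold Rdiv; rewrite Rinv_0, Rmult_0_r; lra|].
  apply Rle_div_l; [apply lt_0_INR; lia|]. rewrite Rmult_comm.
  apply sumR_le_const. intros n Hn. left. now apply Hnear.
Qed.

(** On a window of length [M] starting at [m], [P(m + h) = c_k h^k + Q(h)] with [deg Q < k];
    replacing [c_k] by [z + alpha] with [z] an integer changes each phase by at most
    [|c_k - z - alpha| M^k]. *)
Lemma Cmod_twisted_sum_window c alpha z m M y : (0 < M)%nat ->
  Cmod (twisted_sum T f (fun h => poly_eval c (S k) (INR (m + h))) y M) <=
  INR M * sup_twisted_avg alpha M y + INR M * (4 * PI * Rabs (c k - IZR z - alpha) * INR M ^ k * B).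
Proof.
  intros HM. destruct (poly_eval_shift k c (INR m)) as [c' Hc'].
  set (th h := (c k - IZR z) * INR h ^ k + poly_eval c' k (INR h)).
  rewrite (twisted_sum_add_int T _ th).
  2: { intros h. exists (z * Z.of_nat (h ^ k))%Z. unfold th.
       rewrite <- IZR_mul_pow_INR, plus_INR, Rplus_comm, Hc'. ring. }
  replace (twisted_sum T f th y M)
    with (twisted_sum T f (phase k alpha c') y M
          + (twisted_sum T f th y M - twisted_sum T f (phase k alpha c') y M))%C
    by ring.
  eapply Rle_trans; [apply Cmod_triangle|]. apply Rplus_le_compat.
  - pose proof (ge_sup_twisted_avg alpha M y c') as Hsup. unfold twisted_avg in Hsup.
    apply Rle_div_l in Hsup; [lra|apply lt_0_INR; exact HM].
  - eapply Rle_trans; [apply (Cmod_twisted_sum_sub_phase T HB)|]. apply sumR_le_const. intros h Hh.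
    unfold th, phase.
    replace ((c k - IZR z) * INR h ^ k + poly_eval c' k (INR h)
             - (INR h ^ k * alpha + poly_eval c' k (INR h)))
      with ((c k - IZR z - alpha) * INR h ^ k) by ring.
    rewrite Rabs_mult, (Rabs_pos_eq (INR h ^ k)) by (apply pow_le, pos_INR).
    assert (INR h ^ k <= INR M ^ k) by (apply pow_incr; split; [apply pos_INR|apply le_INR; lia]).
    pose proof PI_RGT_0. pose proof (Rabs_pos (c k - IZR z - alpha)).
    apply Rmult_le_compat_r; [exact HB0|]. rewrite <- Rmult_assoc.
    apply Rmult_le_compat_l; [|exact H]. apply Rmult_le_pos; [lra|exact H1].
Qed.

Lemma twisted_avg_le_birkhoff_avg c alpha z x N M : (0 < M)%nat ->
  twisted_avg T f (fun n => poly_eval c (S k) (INR n)) x N <=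
  birkhoff_avg T x (sup_twisted_avg alpha M) N
  + 4 * PI * Rabs (c k - IZR z - alpha) * INR M ^ k * B + 2 * INR M * B / INR N.
Proof.
  intros HM. assert (HM' : 0 < INR M) by (apply lt_0_INR; exact HM).
  destruct N as [|N].
  - unfold twisted_avg, birkhoff_avg, Rdiv. simpl. rewrite Rinv_0, !Rmult_0_r, Rplus_0_l, Rplus_0_r.
    pose proof PI_RGT_0. pose proof (Rabs_pos (c k - IZR z - alpha)).
    assert (0 <= INR M ^ k) by (apply pow_le; lra).
    apply Rmult_le_pos; [|exact HB0]. apply Rmult_le_pos; [|assumption]. apply Rmult_le_pos; lra.
  - set (a n := (e2pi (poly_eval c (S k) (INR n)) * f (iter_map n T x))%C).
    pose proof (Cmod_csum_blocks a B (S N) M) as Hblocks.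
    assert (Hwin : forall m, (m < S N)%nat -> Cmod (csum (fun h => a (m + h)%nat) M) <=
      INR M * sup_twisted_avg alpha M (iter_map m T x) +
      INR M * (4 * PI * Rabs (c k - IZR z - alpha) * INR M ^ k * B)).
    { intros m _. eapply Rle_trans; [|apply (Cmod_twisted_sum_window c alpha z m M _ HM)].
      apply Req_le. f_equal. apply csum_ext. intros h _. unfold a.
      now rewrite Nat.add_comm, iter_map_add. }
    apply sumR_le in Hwin. rewrite sumR_plus, sumR_scal, sumR_const in Hwin.
    assert (HN : 0 < INR (S N)) by (apply lt_0_INR; lia).
    unfold twisted_avg, birkhoff_avg. apply Rle_div_l; [exact HN|].
    apply (Rmult_le_reg_l (INR M)); [exact HM'|].
    eapply Rle_trans.
    { apply Hblocks. intros n. unfold a. rewrite Cmod_mult, Cmod_e2pi, Rmult_1_l. apply HB. }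
    set (Sg := sumR (fun n => sup_twisted_avg alpha M (iter_map n T x)) (S N)) in *.
    set (K := 4 * PI * Rabs (c k - IZR z - alpha) * INR M ^ k * B) in *.
    replace (INR M * ((Sg / INR (S N) + K + 2 * INR M * B / INR (S N)) * INR (S N)))
      with (INR M * Sg + INR (S N) * (INR M * K) + 2 * INR M * INR M * B) by (field; lra).
    lra.
Qed.

Hypothesis Hlower : forall alpha y e, e > 0 -> exists N0, forall N, (N0 <= N)%nat ->
  forall c, twisted_avg T f (phase k alpha c) y N <= e.

Lemma sup_twisted_avg_pointwise_null alpha y e : e > 0 ->
  exists M0, forall M, (M0 <= M)%nat -> sup_twisted_avg alpha M y <= e.
Proof.
  intros He. destruct (Hlower alpha y e He) as [N0 HN0]. exists N0. intros M HM.
  apply (supR_le _ _ (fun _ => 0)). intros c. now apply HN0.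
Qed.

Lemma twisted_avg_local_uniform_bound L x alpha eps :
  uniquely_ergodic d T -> invariant_state d T L -> eps > 0 ->
  exists delta, delta > 0 /\ exists N1, forall N, (N1 <= N)%nat -> forall c z,
    Rabs (c k - IZR z - alpha) < delta ->
    twisted_avg T f (fun n => poly_eval c (S k) (INR n)) x N <= eps.
Proof.
  intros Hue HL Heps.
  destruct (state_pointwise_null (invariant_state_positive d T L HL) Hmetric Hcompact
    (fun M => sup_twisted_avg alpha (S M)) B) with (e := eps / 8) as [M HM].
  - intros M. apply continuous_sup_twisted_avg.
  - intros M y. apply sup_twisted_avg_bounds.
  - intros y e He. destruct (sup_twisted_avg_pointwise_null alpha y e He) as [M0 HM0].
    exists M0. intros M HM. apply HM0. lia.
  - lra.
  - set (M' := S M) in HM. assert (HM' : (0 < M')%nat) by lia.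
    assert (HMk : 0 <= INR M' ^ k) by apply pow_le, pos_INR.
    pose proof PI_RGT_0.
    assert (Hden : 0 < 16 * PI * INR M' ^ k * B + 1).
    { assert (0 <= PI * INR M' ^ k * B) by (apply Rmult_le_pos; [apply Rmult_le_pos|]; lra). lra. }
    exists (eps / (16 * PI * INR M' ^ k * B + 1)). split; [apply Rdiv_lt_0_compat; lra|].
    destruct (uniquely_ergodic_birkhoff_avg_le d T L x (sup_twisted_avg alpha M') Hmetric Hcompact
      Hue HL (continuous_sup_twisted_avg alpha M') (eps / 8)) as [NB HNB]; [lra|].
    destruct (div_INR_eventually_lt (2 * INR M' * B) (eps / 8)) as [NE HNE]; [lra|].
    exists (Nat.max NB NE). intros N HN c z Hz.
    eapply Rle_trans; [apply (twisted_avg_le_birkhoff_avg c alpha z x N M' HM')|].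
    assert (Hphase : 4 * PI * Rabs (c k - IZR z - alpha) * INR M' ^ k * B <= eps / 4).
    { assert (Hr : Rabs (c k - IZR z - alpha) * (16 * PI * INR M' ^ k * B + 1) <= eps).
      { apply Rlt_div_r in Hz; [lra|exact Hden]. }
      assert (0 <= PI * INR M' ^ k * B) by (apply Rmult_le_pos; [apply Rmult_le_pos|]; lra).
      pose proof (Rabs_pos (c k - IZR z - alpha)). nra. }
    specialize (HNB N ltac:(lia)). specialize (HNE N ltac:(lia)). lra.
Qed.

End PolynomialPhases.

Lemma unit_interval_uniform (P : R -> nat -> Prop) :
  (forall a, 0 <= a <= 1 -> exists delta, delta > 0 /\ exists N1, forall N, (N1 <= N)%nat ->
     forall b, Rabs (b - a) < delta -> P b N) ->
  exists N0, forall N, (N0 <= N)%nat -> forall b, 0 <= b <= 1 -> P b N.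
Proof.
  intros Hloc.
  set (A s := 0 <= s <= 1 /\ exists N0, forall N, (N0 <= N)%nat -> forall b, 0 <= b <= s -> P b N).
  assert (A0 : A 0).
  { destruct (Hloc 0) as [d0 [Hd0 [N1 HN1]]]; [lra|]. split; [lra|].
    exists N1. intros N HN b Hb. apply HN1; [exact HN|]. replace (b - 0) with 0 by lra.
    rewrite Rabs_R0. exact Hd0. }
  destruct (completeness A) as [s [Hub Hlub]].
  - exists 1. intros r [Hr _]. lra.
  - now exists 0.
  - assert (Hs : 0 <= s <= 1) by (split; [now apply Hub|apply Hlub; intros r [Hr _]; lra]).
    destruct (Hloc s Hs) as [ds [Hds [N1 HN1]]].
    assert (Hclose : exists s1, A s1 /\ s - ds < s1).
    { apply NNPP. intros Hno. assert (s <= s - ds); [|lra]. apply Hlub. intros r Hr.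
      apply Rnot_lt_le. intros Hlt. apply Hno. now exists r. }
    destruct Hclose as [s1 [[Hs1 [N2 HN2]] Hs1s]].
    set (s' := Rmin 1 (s + ds / 2)).
    assert (As' : A s').
    { split; [unfold s'; split; [apply Rmin_glb; lra|apply Rmin_l]|].
      exists (Nat.max N1 N2). intros N HN b Hb. destruct (Rle_dec b s1).
      - apply HN2; [lia|lra].
      - apply HN1; [lia|]. pose proof (Rmin_r 1 (s + ds / 2)).
        apply Rabs_def1; unfold s' in Hb; lra. }
    assert (Hs'1 : s' = 1).
    { specialize (Hub s' As'). unfold s' in *. unfold Rmin in *.
      destruct (Rle_dec 1 (s + ds / 2)); lra. }
    rewrite Hs'1 in As'. destruct As' as [_ [N0 HN0]]. now exists N0.
Qed.

Theorem proposition4p3 (X : Type) (d : X -> X -> R) (T : X -> X)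
  (k : nat) (fr fi : X -> R) :
  tds d T ->
  (forall j : nat, (j >= 1)%nat -> uniquely_ergodic d (iter_map j T)) ->
  (k >= 1)%nat ->
  continuous_fun d fr -> continuous_fun d fi ->
  (forall (alpha : R) (x : X) (eps : R), eps > 0 ->
     exists N0 : nat, forall N : nat, (N >= N0)%nat ->
       forall c : nat -> R,
         avg_abs (fun n => INR n ^ k * alpha + poly_eval c k (INR n))
                 fr fi T x N <= eps) ->
  forall (x : X) (eps : R), eps > 0 ->
    exists N0 : nat, forall N : nat, (N >= N0)%nat ->
      forall c : nat -> R,
        avg_abs (fun n => poly_eval c (S k) (INR n)) fr fi T x N <= eps.
Proof.
  intros [Hm [Hc HT]] Hue _ Hfr Hfi Hlower x eps Heps.
  assert (HueT : uniquely_ergodic d T) by exact (Hue 1%nat (le_n 1)).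
  pose proof HueT as [[L HL] _].
  set (f y := (fr y, fi y)).
  destruct (continuous_fun_bounded Hm Hc fr Hfr) as [Br HBr].
  destruct (continuous_fun_bounded Hm Hc fi Hfi) as [Bi HBi].
  assert (HB : forall y, Cmod (f y) <= Br + Bi).
  { intros y. eapply Rle_trans; [apply Cmod_le_Rabs_re_im|]. simpl.
    specialize (HBr y). specialize (HBi y). lra. }
  assert (HB0 : 0 <= Br + Bi) by (eapply Rle_trans; [apply Cmod_ge_0|apply (HB x)]).
  destruct (unit_interval_uniform (fun b N => forall c z, c k - IZR z = b ->
    twisted_avg T f (fun n => poly_eval c (S k) (INR n)) x N <= eps)) as [N0 HN0].
  { intros alpha _.
    destruct (twisted_avg_local_uniform_bound X d T f (Br + Bi) k Hm Hc HT
      (continuous_cfun_pair fr fi Hfr Hfi) HB0 HB) with (L := L) (x := x) (alpha := alpha)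
      (eps := eps) as [delta [Hdelta [N1 HN1]]]; [|exact HueT|exact HL|exact Heps|].
    - intros alpha' y e He. destruct (Hlower alpha' y e He) as [N2 HN2]. exists N2. intros N HN c.
      unfold f. rewrite <- avg_abs_twisted_avg. now apply HN2.
    - exists delta. split; [exact Hdelta|]. exists N1.
      intros N HN b Hb c z <-. exact (HN1 N HN c z Hb). }
  exists N0. intros N HN c. rewrite avg_abs_twisted_avg.
  destruct (archimed (c k)) as [Hup1 Hup2].
  apply (HN0 N HN (c k - IZR (up (c k) - 1))) with (z := (up (c k) - 1)%Z); [|reflexivity].
  rewrite minus_IZR. lra.
Qed.
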